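(* Let $p$ be an SCF rationalizable within the class of Fechnerian RUMs, and let $x,y\in X$. If $(x,y)\in T(R^s\cup R^f)$, then every Fechnerian RUM $(u,g)$ rationalizing $p$ satisfies $u(x)\geq u(y)$. If $(x,y)\in T_P(R^s\cup R^f)$, then every such model satisfies $u(x)>u(y)$.
   Context: $X$ is a finite set of options; $C=\{(x,y): x,y\in X,\ x\neq y\}$; $D\subseteq C$ is a fixed non-empty set with $(x,y)\in D\Rightarrow (y,x)\in D$. An SCF $p$ assigns to each $(x,y)\in D$ a number $p(x,y)>0$ with $p(x,y)+p(y,x)=1$. A RUM is a pair $(u,g)$ with $u:X\to\mathbb{R}$ and $g$ assigning to each $(x,y)\in C$ a density $g(x,y)$ on $\mathbb{R}$ (cdf $G(x,y)$) with $\int v\,g(x,y)(v)\,dv=u(x)-u(y)=:v(x,y)$, $g(x,y)(v)=g(y,x)(-v)$ for all $v$, and connected support. It rationalizes $p$ if $G(x,y)(0)=p(y,x)$ for all $(x,y)\in D$. A RUM is Fechnerian if there is a density $g$ on $\mathbb{R}$ with $g(\delta)=g(-\delta)>0$ for all $\delta\geq0$ such that $g(x,y)(v)=g(v-v(x,y))$ for all $(x,y)\in C$, $v\in\mathbb{R}$. Relations on $X$: $(x,y)\in R^s$ iff $x=y$, or $(x,y)\in D$ and $p(x,y)\geq p(y,x)$; $(x,y)\in R^f$ iff $(x,y)\in C\setminus D$ and there exists $z\in X$ with $(x,z),(y,z)\in D$ and $p(x,z)\geq p(y,z)$. For a binary relation $R$, $T(R)$ is its transitive closure ($(x,y)\in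 T(R)$ iff there is a sequence $x_1=x,\dots,x_n=y$, $n\geq2$, with consecutive pairs in $R$) and $T_P(R)$ the asymmetric part of $T(R)$. *)

From HB Require Import structures.
From mathcomp Require Import all_boot all_order all_algebra.
From mathcomp Require Import all_classical all_reals all_analysis.
From Stdlib Require Import Relations.
Set Implicit Arguments. Unset Strict Implicit. Unset Printing Implicit Defensive.
Import Order.TTheory GRing.Theory Num.Theory.
Import numFieldNormedType.Exports.
Local Open Scope classical_set_scope.
Local Open Scope ring_scope.

Section Defs.
Context {R : realType} {X : finType}.

Notation leb := (@lebesgue_measure R).

Definition inC (x y : X) : Prop := x <> y.

Definition valid_domain (D : {set X * X}) : Prop :=
  [/\ (forall x y, (x, y) \in D -> x <> y),
      (exists x y, (x, y) \in D) &
      (forall x y, (x, y) \in D -> (y, x) \in D)].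

(* stochastic choice function on D (values outside D are irrelevant) *)
Definition is_SCF (D : {set X * X}) (p : X -> X -> R) : Prop :=
  forall x y, (x, y) \in D -> 0 < p x y /\ p x y + p y x = 1.

Definition is_density (f : R -> R) : Prop :=
  [/\ measurable_fun setT f,
      (forall v, 0 <= f v) &
      (\int[leb]_v (f v)%:E = 1)%E].

Definition cdf (f : R -> R) (t : R) : \bar R :=
  (\int[leb]_(v in `]-oo, t]) (f v)%:E)%E.

Definition dsupport (f : R -> R) : set R := closure [set v | 0 < f v].

Definition vdiff (u : X -> R) (x y : X) : R := u x - u y.

Definition is_RUM (u : X -> R) (g : X -> X -> R -> R) : Prop :=
  forall x y, inC x y ->
  [/\ is_density (g x y),
      leb.-integrable setT (fun v => (v * g x y v)%:E),
      (\int[leb]_v (v * g x y v)%:E = (vdiff u x y)%:E)%E,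
      (forall v, g x y v = g y x (- v)) &
      connected (dsupport (g x y))].

Definition rationalizes (D : {set X * X}) (u : X -> R) (g : X -> X -> R -> R)
  (p : X -> X -> R) : Prop :=
  is_RUM u g /\ forall x y, (x, y) \in D -> cdf (g x y) 0 = (p y x)%:E.

Definition is_Fechnerian (u : X -> R) (g : X -> X -> R -> R) : Prop :=
  is_RUM u g /\
  exists g0 : R -> R,
    [/\ is_density g0,
        (forall d, 0 <= d -> g0 d = g0 (- d) /\ 0 < g0 d) &
        (forall x y, inC x y -> forall v, g x y v = g0 (v - vdiff u x y))].

Definition Fechner_rationalizable (D : {set X * X}) (p : X -> X -> R) : Prop :=
  exists u g, is_Fechnerian u g /\ rationalizes D u g p.

Definition Rs (D : {set X * X}) (p : X -> X -> R) (x y : X) : Prop :=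
  x = y \/ ((x, y) \in D /\ p y x <= p x y).

Definition Rf (D : {set X * X}) (p : X -> X -> R) (x y : X) : Prop :=
  (inC x y /\ (x, y) \notin D) /\
  exists z, [/\ (x, z) \in D, (y, z) \in D & p y z <= p x z].

Definition RsRf D p : relation X := fun x y => Rs D p x y \/ Rf D p x y.

Definition TC (Q : relation X) : relation X := clos_trans X Q.
Definition TP (Q : relation X) : relation X := fun x y => TC Q x y /\ ~ TC Q y x.

End Defs.

(** A Fechnerian model rationalizing p has an everywhere positive noise
    density g0 with strictly increasing cdf G0, and translating the noise
    gives p(a,b) = G0(u(a) - u(b)) on D.  Hence comparing two choice
    probabilities compares the corresponding utility differences:
    p(x,y) >= p(y,x) iff u(x) >= u(y), and p(x,z) >= p(y,z) iff
    u(x) >= u(y).  So every step of R^s or R^f weakly decreases u, and a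
    step between options of equal utility can be reversed.  Along a chain
    of T(R^s u R^f) utilities therefore decrease weakly, and if the two
    ends have equal utility, all steps are level and the reversed chain
    shows that the pair is not in the asymmetric part T_P. *)
From Pilot Require Import Defs.
From HB Require Import structures.
From mathcomp Require Import all_boot all_order all_algebra.
From mathcomp Require Import all_classical all_reals all_analysis.
From mathcomp Require Import measurable_realfun lra.
From Stdlib Require Import Relations.
Import Order.TTheory GRing.Theory Num.Theory.
Local Open Scope classical_set_scope.
Local Open Scope ring_scope.

Section clos_trans_monotone.
Context {T : Type} {disp : Order.disp_t} {O : porderType disp}.
Context {Q : relation T} {f : T -> O}.
Local Open Scope order_scope.
Hypothesis Q_le : forall a b, Q a b -> f b <= f a.

Lemma clos_trans_le a b : clos_trans T Q a b -> f b <= f a.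
Proof. by elim=> [|a' b' c' _ le_ba _ le_cb]; [exact: Q_le | exact: le_trans le_cb le_ba]. Qed.

Hypothesis Q_level_sym : forall a b, Q a b -> f a = f b -> Q b a.

Lemma clos_trans_level_sym a b :
  clos_trans T Q a b -> f a = f b -> clos_trans T Q b a.
Proof.
elim=> [a' b' ab eq_ab|a' b' c' ab IHab bc IHbc eq_ac].
  exact/t_step/Q_level_sym.
have le_ba := clos_trans_le _ _ ab; have le_cb := clos_trans_le _ _ bc.
have eq_ab : f a' = f b'.
  by apply/eqP; rewrite eq_le le_ba eq_ac le_cb.
by apply: t_trans (IHbc _) (IHab eq_ab); rewrite -eq_ab.
Qed.

Lemma clos_trans_asym_lt a b :
  clos_trans T Q a b -> ~ clos_trans T Q b a -> f b < f a.
Proof.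
move=> ab Nba; rewrite lt_neqAle clos_trans_le // andbT.
by apply/eqP => eq_ba; apply/Nba/clos_trans_level_sym.
Qed.

End clos_trans_monotone.

Section cdf.
Context {R : realType}.
Local Notation mu := (@lebesgue_measure R).

Lemma lebesgue_measure_shift (e : R) (A : set (measurableTypeR R)) :
  measurable A ->
  pushforward mu ((fun x : R => x + e) : measurableTypeR R -> measurableTypeR R) A
  = mu A.
Proof.
move=> mA; apply/esym.
unshelve eapply (lebesgue_measure_unique (mu := pushforward mu
  ((fun x : R => x + e) : measurableTypeR R -> measurableTypeR R))) => //.
- exact: measurable_funD.
- move=> _ [[a b]] _ <-; rewrite /pushforward /=.
  transitivity (mu `](a - e), (b - e)]%classic); last first.
    congr (mu _).
    by apply/seteqP; split => x /=; rewrite !in_itv/= ltrBlDr lerBrDr.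
  rewrite !lebesgue_measure_itv/= !lte_fin ltrD2r.
  by case: ifP => // _; rewrite -!EFinD opprB addrA subrK.
Qed.

Variable f : R -> R.
Hypotheses (mf : measurable_fun setT f) (f_ge0 : forall v, 0 <= f v).

Let mEf : measurable_fun setT (EFin \o f).
Proof. exact/measurable_EFinP. Qed.

Lemma cdf_shift (d t : R) :
  Defs.cdf (fun v => f (v - d)) t = Defs.cdf f (t - d).
Proof.
pose shift := (fun x : R => x - d) : measurableTypeR R -> measurableTypeR R.
have mshift : measurable_fun setT shift by exact: measurable_funD.
rewrite /Defs.cdf.
transitivity (\int[pushforward mu shift]_(y in `]-oo, (t - d)%R]) (f y)%:E)%E.
  rewrite ge0_integral_pushforward//=; last 2 first.
  - exact: measurable_funS mEf.
  - by move=> x _; rewrite lee_fin.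
  by congr (integral _ _ _); apply/seteqP; split => x /=; rewrite !in_itv/= lerD2r.
by apply: eq_measure_integral => A mA _; exact: lebesgue_measure_shift.
Qed.

Lemma cdf_itv_split (s t : R) : s <= t ->
  Defs.cdf f t = (Defs.cdf f s + \int[mu]_(v in `]s, t]) (f v)%:E)%E.
Proof.
move=> le_st; rewrite /Defs.cdf.
have -> : `]-oo, t]%classic = `]-oo, s]%classic `|` `]s, t]%classic.
  apply/seteqP; split => x /=; rewrite !in_itv/=.
    by move=> le_xt; case: (leP x s) => xs; [left | right; rewrite le_xt].
  by case=> [le_xs|/andP[_ ->]] //; exact: le_trans le_st.
rewrite ge0_integral_setU//=.
- exact: measurable_funS mEf.
- by move=> x _; rewrite lee_fin.
- apply/disj_setPS => x /= []; rewrite !in_itv/= => le_xs /andP[lt_sx _].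
  by move: (lt_le_trans lt_sx le_xs); rewrite ltxx.
Qed.

Lemma integral_itvoc_gt0 (s t : R) : s < t ->
  (forall v, s < v <= t -> 0 < f v) -> (0 < \int[mu]_(v in `]s, t]) (f v)%:E)%E.
Proof.
move=> lt_st f_gt0; rewrite lt0e integral_ge0 ?andbT; last first.
  by move=> x _; rewrite lee_fin.
apply/eqP => int0.
have : (\int[mu]_(x in `]s, t]) `|(f x)%:E| = 0)%E.
  by rewrite -int0; apply: eq_integral => x _; rewrite abse_EFin ger0_norm.
(* f would vanish a.e. on ]s, t], which has positive measure. *)
case/ae_eq_integral_abs => //; first exact: measurable_funS mEf.
move=> N [mN N0 subN].
have : (mu `]s, t]%classic <= mu N)%E.
  apply: le_measure; rewrite ?inE// => x st_x; apply: subN => /= /(_ st_x) /eqP.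
  by rewrite /cst eqe gt_eqF // f_gt0 -?in_itv.
by rewrite N0 lebesgue_measure_itv/= lte_fin lt_st -EFinD lee_fin subr_le0 leNgt lt_st.
Qed.

End cdf.

Section density_cdf.
Context {R : realType}.
Variable f : R -> R.
Hypotheses (f_density : is_density f) (f_gt0 : forall v, 0 < f v).

Lemma cdf_fin_num (t : R) : Defs.cdf f t \is a fin_num.
Proof.
case: f_density => mf f_ge0 int1.
rewrite ge0_fin_numE; last by apply: integral_ge0 => x _; rewrite lee_fin.
apply: (@le_lt_trans _ _ 1%E); last by rewrite ltey.
rewrite -int1; apply: ge0_subset_integral => //.
- exact/measurable_EFinP.
- by move=> x _; rewrite lee_fin.
Qed.

Lemma cdf_lt : {homo Defs.cdf f : s t / s < t >-> (s < t)%E}.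
Proof.
case: f_density => mf f_ge0 _ s t lt_st.
rewrite (@cdf_itv_split _ f mf f_ge0 s t (ltW lt_st)) lteDl ?cdf_fin_num //.
exact: integral_itvoc_gt0.
Qed.

Lemma cdf_le : {mono Defs.cdf f : s t / s <= t >-> (s <= t)%E}.
Proof. exact/le_mono/cdf_lt. Qed.

End density_cdf.

Section Fechnerian_rationalization.
Context {R : realType} {X : finType}.
Context {D : {set X * X}} {p : X -> X -> R} {u : X -> R} {g : X -> X -> R -> R}.
Hypotheses (D_irr : forall x y, (x, y) \in D -> x <> y)
  (D_sym : forall x y, (x, y) \in D -> (y, x) \in D).
Hypotheses (ug_Fechner : is_Fechnerian u g) (ug_p : rationalizes D u g p).

Lemma Fechnerian_choice_cdf : exists g0 : R -> R,
  [/\ is_density g0, forall v, 0 < g0 v &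
      forall a b, (a, b) \in D -> (p a b)%:E = Defs.cdf g0 (u a - u b)].
Proof.
case: ug_Fechner => _ [g0 [g0_density g0_even g_shift]].
case: ug_p => _ g_cdf.
exists g0; split => // [v|a b ab].
  have [v_ge0|v_lt0] := leP 0 v; first by case: (g0_even v v_ge0).
  by have := g0_even (- v); rewrite oppr_ge0 (ltW v_lt0) opprK => /(_ isT) [<-].
have ba := D_sym _ _ ab; rewrite -g_cdf //.
have -> : g b a = fun v => g0 (v - vdiff u b a).
  by apply/funext => v; apply: g_shift; exact: D_irr.
by case: g0_density => mg0 g0_ge0 _; rewrite cdf_shift // sub0r opprB.
Qed.

Lemma Fechnerian_choice_le a b z w : (a, z) \in D -> (b, w) \in D ->
  (p b w <= p a z) = (u b - u w <= u a - u z).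
Proof.
have [g0 [g0_density g0_gt0 p_cdf]] := Fechnerian_choice_cdf.
by move=> az bw; rewrite -lee_fin p_cdf // p_cdf // cdf_le.
Qed.

Lemma RsRf_le a b : RsRf D p a b -> u b <= u a.
Proof.
case=> [[->//|[ab]]|[_ [z [az bz]]]].
  by have ba := D_sym _ _ ab; rewrite Fechnerian_choice_le //; lra.
by rewrite Fechnerian_choice_le //; lra.
Qed.

Lemma RsRf_level_sym a b : RsRf D p a b -> u a = u b -> RsRf D p b a.
Proof.
move=> + eq_ab; case=> [[->|[ab _]]|[[neq_ab abD] [z [az bz _]]]].
- by left; left.
- have ba := D_sym _ _ ab.
  by left; right; rewrite Fechnerian_choice_le // eq_ab.
- right; split.
    by split; [by move=> /esym | apply: contra abD => /D_sym].
  by exists z; split; rewrite // Fechnerian_choice_le // eq_ab.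
Qed.

End Fechnerian_rationalization.

Theorem corollary5 (R : realType) (X : finType) (D : {set X * X})
  (p : X -> X -> R) :
  valid_domain D -> is_SCF D p -> Fechner_rationalizable D p ->
  forall x y : X,
    (TC (RsRf D p) x y ->
       forall (u : X -> R) (g : X -> X -> R -> R),
         is_Fechnerian u g -> rationalizes D u g p -> u y <= u x) /\
    (TP (RsRf D p) x y ->
       forall (u : X -> R) (g : X -> X -> R -> R),
         is_Fechnerian u g -> rationalizes D u g p -> u y < u x).
Proof.
move=> [D_irr _ D_sym] _ _ x y; split.
  move=> xy u g ug_Fechner ug_p.
  exact: clos_trans_le (RsRf_le D_irr D_sym ug_Fechner ug_p) _ _ xy.
move=> [xy Nyx] u g ug_Fechner ug_p.
apply: (clos_trans_asym_lt (RsRf_le D_irr D_sym ug_Fechner ug_p)) => //.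
exact: RsRf_level_sym D_irr D_sym ug_Fechner ug_p.
Qed.
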